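(* Let $d=4k$ with $k>1$, $n=d/2$, $\omega=e^{2\pi i/d}$, and $F_d=(\omega^{jl})_{j,l=0}^{d-1}$ the Fourier matrix. For $\vec\alpha=(\alpha_1,\dots,\alpha_{n-1})\in\mathbb{R}^{n-1}$ define the real $d\times d$ matrix $R_1(\vec\alpha)$ by $R_1(\vec\alpha)_{j,l}=0$ if $j$ is even, $R_1(\vec\alpha)_{j,l}=0$ if $j$ is odd and $l\equiv0\pmod n$, and $R_1(\vec\alpha)_{j,l}=\alpha_{(l\bmod n)}$ otherwise (where $l\bmod n\in\{1,\dots,n-1\}$), and set $R_2(\vec\beta)=R_1(\vec\beta)^t$. Then for all $\vec\alpha,\vec\beta\in\mathbb{R}^{n-1}$ the matrices $F_d\circ\exp\big(i(R_1(\vec\alpha)+R_2(\vec\beta))\big)$ and $F_d\circ\exp\big(i(R_1(\vec\alpha)+R_2(\vec\beta))^t\big)$ are complex Hadamard matrices.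
   Context: A $d\times d$ complex Hadamard matrix has unimodular entries and pairwise orthogonal columns. $\circ$ denotes the entrywise product and $\exp(iR)$ the entrywise exponential $(\exp(iR))_{jl}=e^{iR_{jl}}$; rows and columns are indexed $0,\dots,d-1$. *)

From HB Require Import structures.
From mathcomp Require Import all_boot all_order all_algebra.
From mathcomp Require Import reals trigo.
From mathcomp Require Import complex.
Set Implicit Arguments. Unset Strict Implicit. Unset Printing Implicit Defensive.
Import Order.TTheory GRing.Theory Num.Theory.
Local Open Scope ring_scope.
Local Open Scope complex_scope.

Definition expi (R : realType) (x : R) : R[i] := Complex (cos x) (sin x).

Definition is_complex_hadamard (R : realType) (d : nat) (H : 'M[R[i]]_d) : Prop :=
  (forall j l, `|H j l| = 1) /\
  (forall l m : 'I_d, l != m -> \sum_(j < d) H j l * (H j m)^* = 0).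

Definition fourier_mx (R : realType) (d : nat) : 'M[R[i]]_d :=
  \matrix_(j < d, l < d) (expi (2 * pi / d%:R : R)) ^+ (j * l).

Definition hadamard_prod (R : realType) (d : nat) (A B : 'M[R[i]]_d) : 'M[R[i]]_d :=
  \matrix_(j, l) (A j l * B j l).
Definition exp_i_mx (R : realType) (d : nat) (M : 'M[R]_d) : 'M[R[i]]_d :=
  \matrix_(j, l) expi (M j l).

(* alpha = (alpha_1, ..., alpha_{m}) given as a function on 'I_m (alpha_s stored at index s-1);
   alpha_at a s = alpha_s for 1 <= s <= m *)
Definition alpha_at (R : realType) (m : nat) (a : 'I_m -> R) (s : nat) : R :=
  match @insub nat (fun t => t < m)%N _ s.-1 with Some o => a o | None => 0 end.

Definition R1 (R : realType) (k : nat) (a : 'I_(2 * k - 1) -> R) : 'M[R]_(4 * k) :=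
  \matrix_(j, l)
    if ~~ odd j then 0
    else if (l %% (2 * k) == 0)%N then 0
    else alpha_at a (l %% (2 * k)).

Definition R2 (R : realType) (k : nat) (b : 'I_(2 * k - 1) -> R) : 'M[R]_(4 * k) :=
  (R1 b)^T.

From HB Require Import structures.
From mathcomp Require Import all_boot all_order all_algebra.
From mathcomp Require Import reals trigo.
From mathcomp Require Import complex.
From mathcomp Require Import ring lra zify.
Set Implicit Arguments. Unset Strict Implicit. Unset Printing Implicit Defensive.
Import Order.TTheory GRing.Theory Num.Theory.
Local Open Scope ring_scope.

(* The entries of F_d o exp(iM) are w^(jl) e^(iM_jl), so the inner product of columns
   l <> m is sum_j z^j e^(i(M_jl - M_jm)) with z = w^l / w^m, where w is a primitive d-th
   root of unity. For M = R1(a) + R2(b) (and for its transpose) M_jl only depends on the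
   parity of j and l and on j, l mod n.
   - If l and m have different parities, z^n = -1 while the phase is n-periodic in j, so
     the two halves of the sum cancel.
   - If they have the same parity, the phase difference is 0 for even j and a constant
     delta for odd j, so the sum is (1 + z e^(i delta)) sum_(s < n) z^(2s). The geometric
     sum vanishes unless z^2 = 1, i.e. z = -1; then l = m (mod n), so delta = 0 and the
     prefactor 1 + z vanishes. *)

Section BigSums.
Variable V : zmodType.

Lemma sum_ord_double (f : nat -> V) n :
  \sum_(j < n.*2) f j = \sum_(s < n) (f s.*2 + f s.*2.+1).
Proof. by elim: n => [|n IH]; rewrite ?big_ord0 // doubleS !big_ord_recr /= IH addrA. Qed.

Lemma sum_ord_antiperiodic (f : nat -> V) n :
  (forall j, f (j + n)%N = - f j) -> \sum_(j < n + n) f j = 0.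
Proof.
move=> f_anti; rewrite big_split_ord /= -big_split big1 //= => j _.
by rewrite addnC f_anti addrN.
Qed.

End BigSums.

Lemma sum_expr_eq0 (K : idomainType) (x : K) n :
  x ^+ n = 1 -> x != 1 -> \sum_(i < n) x ^+ i = 0.
Proof.
move=> xn1 x_neq1; apply/eqP; move: (subrX1 x n).
by rewrite xn1 subrr => /esym/eqP; rewrite mulf_eq0 subr_eq0 (negbTE x_neq1).
Qed.

Lemma sum_expr_mul_alternating (K : comPzRingType) (z u : K) (c : nat -> K) n :
  (forall s, c s.*2 = 1) -> (forall s, c s.*2.+1 = u) ->
  \sum_(j < n.*2) z ^+ j * c j = (1 + z * u) * \sum_(s < n) (z ^+ 2) ^+ s.
Proof.
move=> c_even c_odd; rewrite (sum_ord_double (fun j => z ^+ j * c j)) mulr_sumr.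
apply: eq_bigr => s _.
by rewrite c_even c_odd -exprM -mul2n exprS; ring.
Qed.

Lemma prim_expr_half (K : idomainType) n (w : K) :
  n.*2.-primitive_root w -> w ^+ n = -1.
Proof.
move=> w_prim; have n_gt0 : (0 < n)%N by rewrite -double_gt0 (prim_order_gt0 w_prim).
have : (w ^+ n) ^+ 2 == 1 by rewrite -exprM muln2 (prim_expr_order w_prim).
rewrite sqrf_eq1 -(prim_order_dvd w_prim) => /orP[/dvdn_leq|/eqP //].
by move/(_ n_gt0); rewrite -addnn; lia.
Qed.

Section PrimRootRatio.
Variables (K : fieldType) (n : nat) (w : K) (l m : nat).
Hypotheses (w_prim : n.*2.-primitive_root w) (l_lt : (l < n.*2)%N)
  (m_lt : (m < n.*2)%N) (l_neq_m : l != m).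
Let z := w ^+ l / w ^+ m.

Let wm_neq0 : w ^+ m != 0.
Proof.
by rewrite expf_neq0 // (prim_root_eq0 w_prim) -lt0n (prim_order_gt0 w_prim).
Qed.

Lemma prim_ratio_exprn j : z ^+ j = w ^+ (l * j) / w ^+ (m * j).
Proof. by rewrite exprMn exprVn -!exprM. Qed.

Lemma prim_ratio_expr_order : z ^+ n.*2 = 1.
Proof.
rewrite prim_ratio_exprn !(mulnC _ n.*2) !exprM (prim_expr_order w_prim).
by rewrite !expr1n divr1.
Qed.

Lemma prim_ratio_neq1 : z != 1.
Proof.
apply: contra l_neq_m => /eqP z1.
have : w ^+ l == w ^+ m by rewrite -[w ^+ l](divfK wm_neq0) -/z z1 mul1r.
by rewrite (eq_prim_root_expr w_prim) !modn_small.
Qed.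

Lemma prim_ratio_half_odd : odd l != odd m -> z ^+ n = -1.
Proof.
rewrite prim_ratio_exprn !(mulnC _ n) !exprM (prim_expr_half w_prim).
by rewrite -(signr_odd _ l) -(signr_odd _ m); case: (odd l); case: (odd m);
  rewrite //= ?divr1 ?div1r ?invrN1.
Qed.

Lemma prim_ratio_sqr_eq1 : z ^+ 2 = 1 -> z = -1 /\ l = m %[mod n].
Proof.
move/eqP; rewrite sqrf_eq1 (negbTE prim_ratio_neq1) /= => /eqP z_eqN1; split=> //.
have : w ^+ l == w ^+ (n + m).
  by rewrite exprD (prim_expr_half w_prim) -[w ^+ l](divfK wm_neq0) -/z z_eqN1.
rewrite (eq_prim_root_expr w_prim) => /eqP/(congr1 (modn^~ n)).
by rewrite !modn_dvdm ?modnDl // -muln2 dvdn_mulr.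
Qed.

End PrimRootRatio.

Lemma conjC_norm1 (C : numClosedFieldType) (x : C) : `|x| = 1 -> x^* = x^-1.
Proof. by move=> x1; rewrite invC_norm x1 expr1n invr1 mul1r. Qed.

Section ExpI.
Variable R : realType.
Implicit Types x y : R.

Lemma expiD x y : expi (x + y) = expi x * expi y.
Proof. by rewrite /expi cosD sinD; congr Complex; ring. Qed.

Lemma expi0 : expi (0 : R) = 1.
Proof. by rewrite /expi cos0 sin0. Qed.

Lemma expiMn x s : expi x ^+ s = expi (x *+ s).
Proof. by elim: s => [|s IH]; rewrite ?expi0 // exprS IH mulrS expiD. Qed.

Lemma norm_expi x : `|expi x| = 1.
Proof. by rewrite normc_def /= cos2Dsin2 sqrtr1. Qed.

Lemma expiB x y : expi (x - y) = expi x / expi y.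
Proof.
have eNy : expi (- y) = (expi y)^-1.
  by rewrite -conjC_norm1 ?norm_expi // /expi cosN sinN.
by rewrite expiD eNy.
Qed.

Lemma expi_neq1 x : 0 < x < pi *+ 2 -> expi x != 1.
Proof.
move=> /andP[x_gt0 x_lt]; apply/negP => /eqP [cos_x1 _].
pose y := x / 2.
have sin_y_gt0 : 0 < sin y by apply: sin_gt0_pi; rewrite /y; apply/andP; split; lra.
have : cos (y *+ 2) = 1 by rewrite /y mulr2n -splitr.
by rewrite cos_mulr2n cos2sin2; nra.
Qed.

Lemma expi_prim_root d :
  (0 < d)%N -> d.-primitive_root (expi (2 * pi / d%:R : R)).
Proof.
move=> d_gt0; have d_neq0 : d%:R != 0 :> R by rewrite pnatr_eq0 -lt0n.
have wd1 : expi (2 * pi / d%:R : R) ^+ d = 1.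
  by rewrite expiMn -[_ *+ d]mulr_natr divfK // mulr_natl /expi cos2pi sin2pi.
have [e e_prim e_dvd] := prim_order_exists d_gt0 wd1.
suff e_eq_d : e = d by move: e_prim; rewrite e_eq_d.
have e_gt0 := prim_order_gt0 e_prim.
apply/eqP; rewrite eqn_leq dvdn_leq //= leqNgt; apply/negP => e_lt.
have /eqP := prim_expr_order e_prim; apply/negP; rewrite expiMn expi_neq1 //.
have t_gt0 : 0 < e%:R / d%:R :> R by rewrite divr_gt0 ?ltr0n.
have t_lt1 : e%:R / d%:R < 1 :> R by rewrite ltr_pdivrMr ?ltr0n // mul1r ltr_nat.
have -> : 2 * pi / d%:R *+ e = pi * (e%:R / d%:R) *+ 2 :> R by ring.
have := @pi_gt0 R; rewrite !mulr2n => pi_gt0; apply/andP; split; nra.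
Qed.
End ExpI.

(* [R1 a + R2 b] is [fourier_phase (2 * k) (alpha_ext a) (alpha_ext b)] (see [R1_add_R2E]);
   transposing swaps the roles of [a] and [b]. *)
Definition fourier_phase (R : realType) (n : nat) (A B : nat -> R) (j l : nat) : R :=
  (odd j)%:R * A (l %% n)%N + (odd l)%:R * B (j %% n)%N.

Section FourierPhaseHadamard.
Variables (R : realType) (n : nat) (A B : nat -> R).
Hypotheses (n_gt0 : (0 < n)%N) (n_even : ~~ odd n).
Let w := expi (2 * pi / n.*2%:R : R).
Let phase := fourier_phase n A B.
Let w_prim : n.*2.-primitive_root w.
Proof. by apply: expi_prim_root; rewrite double_gt0. Qed.
Let term l m j := (w ^+ l / w ^+ m) ^+ j * expi (phase j l - phase j m).

Lemma fourier_phase_addn j l : phase (j + n) l = phase j l.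
Proof. by rewrite /phase /fourier_phase oddD (negbTE n_even) addbF modnDr. Qed.

Lemma sum_fourier_phase_parity_neq l m : odd l != odd m ->
  \sum_(j < n.*2) term l m j = 0.
Proof.
move=> lm_parity; rewrite -addnn (sum_ord_antiperiodic (f := term l m)) // => j.
by rewrite /term !fourier_phase_addn exprD (prim_ratio_half_odd w_prim lm_parity); ring.
Qed.

Lemma sum_fourier_phase_parity_eq l m :
  (l < n.*2)%N -> (m < n.*2)%N -> l != m -> odd l = odd m ->
  \sum_(j < n.*2) term l m j = 0.
Proof.
move=> l_lt m_lt l_neq_m lm_parity.
have phase_even s : expi (phase s.*2 l - phase s.*2 m) = 1.
  by rewrite /phase /fourier_phase lm_parity odd_double !mul0r !add0r subrr expi0.
have phase_odd s :
    expi (phase s.*2.+1 l - phase s.*2.+1 m) = expi (A (l %% n)%N - A (m %% n)%N).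
  rewrite /phase /fourier_phase lm_parity /= odd_double /=.
  by rewrite !mul1r opprD addrACA subrr addr0.
rewrite (sum_expr_mul_alternating (c := fun j => expi (phase j l - phase j m))
  (w ^+ l / w ^+ m) n phase_even phase_odd).
have [z2_eq1 | z2_neq1] := eqVneq ((w ^+ l / w ^+ m) ^+ 2) 1.
  have [-> lm_mod] := prim_ratio_sqr_eq1 w_prim l_lt m_lt l_neq_m z2_eq1.
  by rewrite lm_mod subrr expi0 mulr1 subrr mul0r.
rewrite sum_expr_eq0 ?mulr0 // -exprM mul2n.
exact: prim_ratio_expr_order w_prim.
Qed.

Lemma fourier_phase_hadamard d (M : 'M[R]_d) :
  n.*2 = d -> (forall j l : 'I_d, M j l = phase j l) ->
  is_complex_hadamard (hadamard_prod (fourier_mx R d) (exp_i_mx M)).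
Proof.
move=> d_eq M_phase; subst d.
set H := hadamard_prod _ _.
have H_E j l : H j l = w ^+ (j * l) * expi (phase j l) by rewrite !mxE M_phase.
have H_norm j l : `|H j l| = 1 by rewrite H_E normrM normrX !norm_expi expr1n mul1r.
split=> // l m l_neq_m.
have H_conj j : H j l * (H j m)^* = term l m j.
  by rewrite /term conjC_norm1 // !H_E invfM mulrACA expiB prim_ratio_exprn !(mulnC j).
rewrite (eq_bigr _ (fun j _ => H_conj j)).
have [lm_parity | lm_parity] := eqVneq (odd l) (odd m).
  exact: sum_fourier_phase_parity_eq.
exact: sum_fourier_phase_parity_neq.
Qed.

End FourierPhaseHadamard.

Section R1R2.
Variables (R : realType) (k : nat).

(* [R1] vanishes in the columns [l = 0 (mod n)], where [alpha_at c] would give [c ord0]. *)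
Definition alpha_ext (c : 'I_(2 * k - 1) -> R) (s : nat) : R :=
  if s == 0%N then 0 else alpha_at c s.

Lemma R1E c (j l : 'I_(4 * k)) :
  R1 c j l = (odd j)%:R * alpha_ext c (l %% (2 * k)).
Proof. by rewrite mxE /alpha_ext; case: (odd j); rewrite /= ?mul1r ?mul0r. Qed.

Lemma R1_add_R2E a b (j l : 'I_(4 * k)) :
  (R1 a + R2 b) j l = fourier_phase (2 * k) (alpha_ext a) (alpha_ext b) j l.
Proof.
have -> : (R1 a + R2 b) j l = R1 a j l + R1 b l j by rewrite !mxE.
by rewrite !R1E.
Qed.

End R1R2.

Theorem mainTheorem11 (R : realType) (k : nat) (hk : (1 < k)%N)
  (a b : 'I_(2 * k - 1) -> R) :
  is_complex_hadamard
    (hadamard_prod (fourier_mx R (4 * k)) (exp_i_mx (R1 a + R2 b)))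
  /\ is_complex_hadamard
    (hadamard_prod (fourier_mx R (4 * k)) (exp_i_mx (R1 a + R2 b)^T)).
Proof.
have n_gt0 : (0 < 2 * k)%N by rewrite muln_gt0 (ltnW hk).
have n_even : ~~ odd (2 * k) by rewrite oddM.
have d_eq : (2 * k).*2 = (4 * k)%N by rewrite -mul2n mulnA.
split; apply: (fourier_phase_hadamard n_gt0 n_even d_eq) => j l.
  exact: R1_add_R2E.
by rewrite mxE R1_add_R2E /fourier_phase addrC.
Qed.
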